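(* Finite prime fields $\mathrm{F}_q$ locally approximate the field of real numbers: $\mathsf{lm}^{\mathrm{loc}}\, \mathrm{F}_q = \mathbb{R}$, i.e. the local ultraproduct of the finite fields $\mathrm{F}_q$ (with the emerging metric described below) is the field $\mathbb{R}$.
   Context: Let $\mathcal{D}$ be a non-principal ultrafilter on $\mathbb{N}$ containing the set of primes, and let ${}^*\mathbb{Z}$ be the corresponding ultrapower of $\mathbb{Z}$. Let $\mathfrak{q}\in {}^*\mathbb{Z}$ be the non-standard prime represented in the $q$-th coordinate by $q$, so that $\mathrm{F}={}^*\mathbb{Z}_{\mathfrak{q}}\cong \prod_\mathcal{D}\mathrm{F}_q$ is the pseudofinite field that is the ultraproduct of the finite prime fields $\mathrm{F}_q$. Assume there is a model ${}^f\mathbb{Z}$ of arithmetic with $\mathbb{Z}\prec {}^f\mathbb{Z}\prec {}^*\mathbb{Z}$ and $\mathfrak{q}> {}^f\mathbb{Z}$ (so $\mathfrak{q}$ exceeds every element of ${}^f\mathbb{Z}$), and let $\mathfrak{l}\in {}^f\mathbb{Z}_{>0}$ be an infinite integer; then $\mathfrak{l}^n<\mathfrak{q}$ for all $n\in\mathbb{N}$. Put ${}^f\mathbb{Z}_{/\mathfrak{l}}(n)=\{k\in {}^*\mathbb{Z}: |k|<\mathfrak{l}^n\}$, which embeds in $\mathrm{F}$ via $k\mapsto k \bmod \mathfrak{q}$. For $m\in\mathbb{N}$ let $S_m(\mathrm{F})=\{z\in\mathrm{F}: \exists k_1,k_2\in {}^f\mathbb{Z}_{/\mathfrak{l}}(m),\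 z=k_1k_2^{-1},\ |k_1|/|k_2|\le m\}$ and $\mathrm{F}_{/\mathfrak{l}}=\bigcup_m S_m(\mathrm{F})$, a subfield of $\mathrm{F}$. On it define the norm $\|z\|=\mathrm{st}(|k_1|/|k_2|)$ for the minimal pair $k_1,k_2$ with $z=k_1k_2^{-1}$ ($\mathrm{st}$ the standard part), and the distance $\mathsf{d}(z_1,z_2)=\|z_1-z_2\|$. The same definitions are applied to each finite field $\mathrm{F}_q$ by interpreting $\mathfrak{l}$ as its $q$-th coordinate $\mathfrak{l}(q)$; these sorts $S_m$ and distance form an emerging metric on the family $\mathrm{F}_q$. The local ultraproduct $\mathsf{lm}^{\mathrm{loc}}\,\mathrm{F}_q$ is defined as follows: take the substructure of the first-order ultraproduct with universe $\bigcup_{m\in\mathbb{N}} S_m$ (here $\mathrm{F}_{/\mathfrak{l}}$), and quotient by the relation $x_1\approx x_2 \iff \mathsf{d}(x_1,x_2)\le 1/n$ for all standard $n$; the result is a complete metric structure. *)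

From HB Require Import structures.
From mathcomp Require Import all_boot all_order all_algebra.
From mathcomp Require Import boolp classical_sets filter reals.
Set Implicit Arguments. Unset Strict Implicit. Unset Printing Implicit Defensive.
Import Order.TTheory GRing.Theory Num.Theory.
Local Open Scope ring_scope.
Local Open Scope classical_set_scope.

Definition ae (D : set_system nat) (P : nat -> Prop) : Prop := D [set q | P q].

Definition nonprincipal (D : set_system nat) : Prop := forall n : nat, ~ D [set n].

Inductive term : Type :=
| tvar of nat | tzero | tone
| tadd of term & term | tmul of term & term | topp of term.

Inductive formula : Type :=
| feq of term & term | flt of term & term
| fnot of formula | fand of formula & formula
| fex of nat & formula.

Section Semantics.
Variables (A : Type) (z o : A) (add mul : A -> A -> A) (opp : A -> A)
          (eqA ltA : A -> A -> Prop) (dom : A -> Prop).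

Fixpoint teval (e : nat -> A) (t : term) : A :=
  match t with
  | tvar i => e i
  | tzero => z
  | tone => o
  | tadd t1 t2 => add (teval e t1) (teval e t2)
  | tmul t1 t2 => mul (teval e t1) (teval e t2)
  | topp t1 => opp (teval e t1)
  end.

Definition upd (e : nat -> A) (i : nat) (a : A) : nat -> A :=
  fun j => if j == i then a else e j.

Fixpoint fsat (e : nat -> A) (f : formula) : Prop :=
  match f with
  | feq t1 t2 => eqA (teval e t1) (teval e t2)
  | flt t1 t2 => ltA (teval e t1) (teval e t2)
  | fnot f1 => ~ fsat e f1
  | fand f1 f2 => fsat e f1 /\ fsat e f2
  | fex i f1 => exists a, dom a /\ fsat (upd e i a) f1
  end.
End Semantics.

Definition satZ (e : nat -> int) (f : formula) : Prop :=
  fsat 0 1 +%R *%R -%R (@eq int) (fun a b => a < b) (fun _ => True) e f.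

(* elements of the ultrapower *Z are represented by sequences nat -> int;
   equality and order are D-almost-everywhere *)
Definition hypint := nat -> int.

Definition satU (D : set_system nat) (dom : hypint -> Prop)
  (e : nat -> hypint) (f : formula) : Prop :=
  fsat (fun _ => 0) (fun _ => 1) (fun x y q => x q + y q) (fun x y q => x q * y q)
    (fun x q => - x q)
    (fun x y => ae D (fun q => x q = y q))
    (fun x y => ae D (fun q => x q < y q)) dom e f.

(* M (a set of representatives, closed under D-a.e. equality) is a model fZ of
   arithmetic with Z < fZ < *Z (elementary substructures) *)
Definition elem_intermediate (D : set_system nat) (M : hypint -> Prop) : Prop :=
  [/\ (forall x y : hypint, M x -> ae D (fun q => x q = y q) -> M y),
      (forall k : int, M (fun _ => k)),
      (forall (f : formula) (e : nat -> hypint), (forall i, M (e i)) ->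
          (satU D M e f <-> satU D (fun _ => True) e f))
    & (forall (f : formula) (e : nat -> int),
          satZ e f <-> satU D M (fun i _ => e i) f)].

(* z lies in the sort S_m(F_q), l q being the q-th coordinate of the infinite integer l *)
Definition inS (l : hypint) (m : nat) (q : nat) (z : 'F_q) : Prop :=
  exists k1 k2 : int,
    [/\ `|k1| < l q ^+ m, `|k2| < l q ^+ m, (k2%:~R : 'F_q) != 0,
        z = k1%:~R / k2%:~R & `|k1| <= m%:Z * `|k2|].

(* elements of the first-order ultraproduct prod_D F_q: sequences of coordinates *)
Definition ultraelt := forall q : nat, 'F_q.

Definition uadd (x y : ultraelt) : ultraelt := fun q => x q + y q.
Definition umul (x y : ultraelt) : ultraelt := fun q => x q * y q.
Definition uone : ultraelt := fun q => 1.

Definition Sm (D : set_system nat) (l : hypint) (m : nat) (x : ultraelt) : Prop :=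
  ae D (fun q => inS l m (x q)).
Definition Fl (D : set_system nat) (l : hypint) (x : ultraelt) : Prop :=
  exists m : nat, Sm D l m x.

Definition minpair (q : nat) (z : 'F_q) (k1 k2 : int) : Prop :=
  [/\ (k2%:~R : 'F_q) != 0, z = k1%:~R / k2%:~R &
      forall j1 j2 : int, (j2%:~R : 'F_q) != 0 -> z = j1%:~R / j2%:~R ->
        Num.max `|k1| `|k2| <= Num.max `|j1| `|j2|].

(* d(x,y) = r : r is the standard part of |k1|/|k2| for the minimal pair of x - y *)
Definition dist_is (R : realType) (D : set_system nat) (x y : ultraelt) (r : R) : Prop :=
  forall eps : R, 0 < eps ->
    ae D (fun q => exists k1 k2 : int, minpair (x q - y q) k1 k2 /\
            `| (`|k1|%:~R / `|k2|%:~R : R) - r | < eps).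

Definition approx (R : realType) (D : set_system nat) (x y : ultraelt) : Prop :=
  forall n : nat, exists r : R, dist_is D x y r /\ r <= (n.+1%:R)^-1.

(* Write [z] in F_q as [a / b] with [|a|, |b| <= h].  If [2 h^2 < q]
   the rational [a / b] is determined by [z]: for two such representations
   [a d - c b] is divisible by [q] and smaller than [q] in absolute value.  An
   element of the sort S_m has a representation of height [l^m], and [l^n < q]
   for every standard [n] because [l^n] lies in the model fZ below [q].  Hence
   almost every coordinate of an element of F_{/l} names a rational of size at
   most [m], additively and multiplicatively, and the minimal pair of
   [x - y] computes the absolute value of the difference.  Taking the limit
   along the ultrafilter gives a ring map [stpart] onto the reals whose fibres
   are the classes of infinitesimally close elements; [floor (r l) / l] is a
   preimage of [r] because [1 / l] is infinitesimal. *)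

From mathcomp Require Import all_boot all_order all_algebra.
From mathcomp Require Import boolp classical_sets filter reals topology normedtype.
From mathcomp Require Import zify ring lra.
Set Implicit Arguments. Unset Strict Implicit. Unset Printing Implicit Defensive.
Import Order.TTheory GRing.Theory Num.Theory numFieldNormedType.Exports.
Local Open Scope ring_scope.
Local Open Scope classical_set_scope.

(** * Fractions of small height in F_q *)

Lemma intr_Fp_eq0 (p : nat) (k : int) : prime p ->
  ((k%:~R : 'F_p) == 0) = (p %| k)%Z.
Proof. by move=> p_pr; rewrite (dvdz_pcharf (pchar_Fp p_pr)). Qed.

Lemma dvdz_lt_eq0 (d : nat) (k : int) : (d %| k)%Z -> `|k| < d%:Z -> k = 0.
Proof.
move=> dk kd; apply/eqP; rewrite -absz_eq0; apply: contraTT kd => k0.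
by rewrite -leNgt lez_nat dvdn_leq // lt0n.
Qed.

Lemma intr_Fp_neq0 (p : nat) (k : int) : prime p -> k != 0 -> `|k| < p%:Z ->
  (k%:~R : 'F_p) != 0.
Proof.
by move=> p_pr k0 kp; rewrite intr_Fp_eq0 //; apply: contra k0 => /dvdz_lt_eq0 ->.
Qed.

Lemma intr_neq0 (S : pzRingType) (k : int) : (k%:~R : S) != 0 -> k != 0.
Proof. by apply: contraNneq => ->. Qed.

Definition frac_rep {q : nat} (z : 'F_q) (a b h : int) :=
  [/\ (b%:~R : 'F_q) != 0, z = a%:~R / b%:~R, `|a| <= h & `|b| <= h].

Section FracRep.
Variable q : nat.
Implicit Types (z : 'F_q) (a b c d h : int).

Lemma frac_rep_ge1 z a b h : frac_rep z a b h -> 1 <= h.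
Proof. by case=> /intr_neq0 b0 _ _ bh; lia. Qed.

Lemma frac_rep_le z a b h h' : h <= h' -> frac_rep z a b h -> frac_rep z a b h'.
Proof. by move=> hh' [b0 -> ah bh]; split; rewrite ?(le_trans _ hh'). Qed.

Lemma frac_rep_opp z a b h : frac_rep z a b h -> frac_rep (- z) (- a) b h.
Proof. by case=> b0 -> ah bh; split; rewrite ?normrN // mulrNz mulNr. Qed.

Lemma frac_rep_add z1 z2 a b c d h :
  frac_rep z1 a b h -> frac_rep z2 c d h ->
  frac_rep (z1 + z2) (a * d + c * b) (b * d) (2 * h * h).
Proof.
move=> [b0 -> ah bh] [d0 -> ch dh]; split.
- by rewrite intrM mulf_neq0.
- by rewrite addf_div // intrD !intrM.
- have adh : `|a * d| <= h * h by rewrite normrM ler_pM.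
  have cbh : `|c * b| <= h * h by rewrite normrM ler_pM.
  by rewrite -mulrA mulr_natl mulr2n (le_trans (ler_normD _ _)) ?lerD.
- have h0 : 0 <= h * h by rewrite mulr_ge0 // (le_trans _ bh).
  rewrite normrM -mulrA (le_trans (ler_pM _ _ bh dh)) //.
  by rewrite ler_peMl // ler1n.
Qed.

Lemma frac_rep_mul z1 z2 a b c d h :
  frac_rep z1 a b h -> frac_rep z2 c d h ->
  frac_rep (z1 * z2) (a * c) (b * d) (h * h).
Proof.
move=> [b0 -> ah bh] [d0 -> ch dh]; split; rewrite ?normrM ?ler_pM //.
- by rewrite intrM mulf_neq0.
- by rewrite mulf_div !intrM.
Qed.

Hypothesis q_pr : prime q.

Lemma frac_rep_cross z a b c d h :
  frac_rep z a b h -> frac_rep z c d h -> 2 * h * h < q%:Z -> a * d = c * b.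
Proof.
move=> [b0 zab ah bh] [d0 zcd ch dh] hq; apply/eqP; rewrite -subr_eq0; apply/eqP.
apply: (@dvdz_lt_eq0 q); first rewrite -intr_Fp_eq0 // intrB !intrM subr_eq0.
  by rewrite -[a%:~R](divfK b0) -[c%:~R](divfK d0) -zab -zcd mulrAC.
have adh : `|a * d| <= h * h by rewrite normrM ler_pM.
have cbh : `|c * b| <= h * h by rewrite normrM ler_pM.
rewrite (le_lt_trans (ler_normB _ _)) // (le_lt_trans _ hq) //.
by rewrite -mulrA mulr_natl mulr2n lerD.
Qed.

End FracRep.

Lemma minpair_ex {q : nat} (z : 'F_q) : exists k1 k2, minpair z k1 k2.
Proof.
pose P n := `[< exists j1 j2 : int, [/\ (j2%:~R : 'F_q) != 0, z = j1%:~R / j2%:~R &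
                  absz (Num.max `|j1| `|j2|) = n] >].
have exP : exists n, P n.
  exists (absz (Num.max `|(z : nat)%:Z| `|1%:Z|)); apply/asboolP.
  by exists (z : nat)%:Z, 1; rewrite divr1 -pmulrn natr_Zp oner_neq0.
have [n /asboolP [k1 [k2 [k20 zk <-]]] min_n] := ex_minnP exP.
exists k1, k2; split=> // j1 j2 j20 zj.
have /min_n : P (absz (Num.max `|j1| `|j2|)) by apply/asboolP; exists j1, j2.
lia.
Qed.

Lemma minpair_frac_rep {q : nat} (z : 'F_q) (k1 k2 a b h : int) :
  minpair z k1 k2 -> frac_rep z a b h -> frac_rep z k1 k2 h.
Proof.
move=> [k20 zk min_k] [b0 zab ah bh]; have := min_k a b b0 zab.
by split=> //; lia.
Qed.

(* The value of the minimal pair of [z]; by [rval_frac] it is the value of any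
   representation of height below sqrt(q/2), if there is one. *)
Definition rval (R : realType) {q : nat} (z : 'F_q) : R :=
  xget 0 [set r | exists k1 k2, minpair z k1 k2 /\ r = k1%:~R / k2%:~R].

Lemma height_lt_sq (h Q : int) : 1 <= h -> 2 * (2 * h * h) * (2 * h * h) < Q ->
  2 * h * h < Q.
Proof. by move=> h1; apply: le_lt_trans; nia. Qed.

Lemma height_exprn_le (L : int) (m : nat) : 2 <= L ->
  2 * (2 * L ^+ m * L ^+ m) * (2 * L ^+ m * L ^+ m) <= L ^+ (4 * m + 3).
Proof.
move=> L2; rewrite exprD mulnC exprM.
have -> : 2 * (2 * L ^+ m * L ^+ m) * (2 * L ^+ m * L ^+ m) = (L ^+ m) ^+ 4 * 2 ^+ 3.
  by ring.
have L0 : 0 <= L by lia.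
by rewrite ler_wpM2l ?exprn_ge0 ?ler_pXn2r ?nnegrE.
Qed.

Section RealValue.
Variables (R : realType) (q : nat).
Hypothesis q_pr : prime q.
Implicit Types (z : 'F_q) (a b c d h : int).

Lemma minpair_ratio z a b h k1 k2 : frac_rep z a b h -> 2 * h * h < q%:Z ->
  minpair z k1 k2 -> (k1%:~R / k2%:~R : R) = a%:~R / b%:~R.
Proof.
move=> zab hq zk; have zk' := minpair_frac_rep zk zab.
have := frac_rep_cross q_pr zk' zab hq; case: zk' zab => /intr_neq0 k20 _ _ _.
by case=> /intr_neq0 b0 _ _ _ e; apply/eqP; rewrite eqr_div ?intr_eq0 // -!intrM e.
Qed.

Lemma rval_frac z a b h : frac_rep z a b h -> 2 * h * h < q%:Z ->
  rval R z = a%:~R / b%:~R.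
Proof.
move=> zab hq; have [k1 [k2 zk]] := minpair_ex z.
have : exists r : R, exists j1 j2, minpair z j1 j2 /\ r = j1%:~R / j2%:~R.
  by exists (k1%:~R / k2%:~R), k1, k2.
rewrite /rval => /(xgetPex 0) [j1 [j2 [zj ->]]].
exact: minpair_ratio zab hq zj.
Qed.

Lemma minpair_norm_ratio z a b h k1 k2 : frac_rep z a b h -> 2 * h * h < q%:Z ->
  minpair z k1 k2 -> (`|k1|%:~R / `|k2|%:~R : R) = `|rval R z|.
Proof.
move=> zab hq zk.
by rewrite (rval_frac zab hq) -(minpair_ratio zab hq zk) normrM normfV !intr_norm.
Qed.

Lemma rval1 : 2 < q%:Z -> rval R (1 : 'F_q) = 1.
Proof.
have one : frac_rep (1 : 'F_q) 1 1 1 by split; rewrite ?oner_neq0 ?normr1 ?divr1.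
by move=> q2; rewrite (rval_frac one) ?divr1 // !mulr1.
Qed.

Lemma rval_le_nat z a b h (m : nat) : frac_rep z a b h -> `|a| <= m%:Z * `|b| ->
  2 * h * h < q%:Z -> `|rval R z| <= m%:R.
Proof.
move=> zab am hq; rewrite (rval_frac zab hq); case: zab => /intr_neq0 b0 _ _ _.
rewrite normrM normfV ler_pdivrMr ?normr_gt0 ?intr_eq0 //.
by rewrite -!intr_norm pmulrn -intrM ler_int.
Qed.

Lemma rval_opp z a b h : frac_rep z a b h -> 2 * h * h < q%:Z ->
  rval R (- z) = - rval R z.
Proof.
move=> zab hq; rewrite (rval_frac (frac_rep_opp zab) hq) (rval_frac zab hq).
by rewrite mulrNz mulNr.
Qed.

Lemma rval_add z1 z2 a b c d h : frac_rep z1 a b h -> frac_rep z2 c d h ->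
  2 * (2 * h * h) * (2 * h * h) < q%:Z -> rval R (z1 + z2) = rval R z1 + rval R z2.
Proof.
move=> zab zcd hq; have hq' := height_lt_sq (frac_rep_ge1 zab) hq.
rewrite (rval_frac (frac_rep_add zab zcd) hq) (rval_frac zab hq') (rval_frac zcd hq').
case: zab zcd => [/intr_neq0 b0 _ _ _] [/intr_neq0 d0 _ _ _].
by rewrite addf_div ?intr_eq0 // intrD !intrM.
Qed.

Lemma rval_mul z1 z2 a b c d h : frac_rep z1 a b h -> frac_rep z2 c d h ->
  2 * (2 * h * h) * (2 * h * h) < q%:Z -> rval R (z1 * z2) = rval R z1 * rval R z2.
Proof.
move=> zab zcd hq; have h1 := frac_rep_ge1 zab; have hq' := height_lt_sq h1 hq.
have hh : h * h <= 2 * h * h by rewrite -mulrA ler_peMl ?mulr_ge0 ?ler1n //; lia.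
rewrite (rval_frac (frac_rep_le hh (frac_rep_mul zab zcd)) hq).
rewrite (rval_frac zab hq') (rval_frac zcd hq').
by rewrite mulf_div !intrM.
Qed.

End RealValue.

(** * The sorts S_m *)

Section Sorts.
Variables (l : hypint) (q : nat).
Implicit Types (z : 'F_q) (m n : nat).

Lemma inS_frac_rep m z :
  inS l m z -> exists a b, frac_rep z a b (l q ^+ m) /\ `|a| <= m%:Z * `|b|.
Proof.
by case=> a [b [al bl b0 zab abm]]; exists a, b; split=> //; split=> //; apply: ltW.
Qed.

Lemma inS_le m m' z : 1 <= l q -> (m <= m')%N -> inS l m z -> inS l m' z.
Proof.
move=> l1 mm' [a [b [al bl b0 zab abm]]]; exists a, b; split=> //.
- by rewrite (lt_le_trans al) // ler_weXn2l.
- by rewrite (lt_le_trans bl) // ler_weXn2l.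
- by rewrite (le_trans abm) // ler_wpM2r // lez_nat.
Qed.

Lemma inS_one : 2 <= l q -> inS l 1 (1 : 'F_q).
Proof.
by move=> l2; exists 1, 1; rewrite expr1 normr1 divr1 oner_neq0; split=> //; lia.
Qed.

Lemma inS_opp m z : inS l m z -> inS l m (- z).
Proof.
case=> a [b [al bl b0 -> abm]].
by exists (- a), b; rewrite normrN mulrNz mulNr; split.
Qed.

Lemma inS_add m n z1 z2 : 2 <= l q ->
  inS l m z1 -> inS l n z2 -> inS l (m + n).+1 (z1 + z2).
Proof.
move=> l2 [a [b [al bl b0 -> abm]]] [c [d [cl dl d0 -> cdn]]].
exists (a * d + c * b), (b * d); split.
- have ad : `|a * d| < l q ^+ m * l q ^+ n by rewrite normrM ltr_pM.
  have cb : `|c * b| < l q ^+ m * l q ^+ n by rewrite normrM mulrC ltr_pM.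
  have lmn : 2 * (l q ^+ m * l q ^+ n) <= l q ^+ (m + n).+1.
    by rewrite exprS exprD ler_wpM2r // mulr_ge0 // exprn_ge0 //; lia.
  by have := ler_normD (a * d) (c * b); lia.
- rewrite normrM (lt_le_trans (ltr_pM _ _ bl dl)) // -exprD ler_weXn2l //; lia.
- by rewrite intrM mulf_neq0.
- by rewrite addf_div // intrD !intrM.
- have ad : `|a * d| <= m%:Z * `|b * d| by rewrite !normrM mulrA ler_wpM2r.
  have cb : `|c * b| <= n%:Z * `|b * d|.
    by rewrite !normrM [`|b| * _]mulrC mulrA ler_wpM2r.
  rewrite (le_trans (ler_normD _ _)) // -addn1 !PoszD !mulrDl mul1r.
  by rewrite -addrA lerD // ler_wpDr.
Qed.

Lemma inS_mul m n z1 z2 : 1 <= l q ->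
  inS l m z1 -> inS l n z2 -> inS l (m + n + m * n) (z1 * z2).
Proof.
move=> l1 [a [b [al bl b0 -> abm]]] [c [d [cl dl d0 -> cdn]]].
have lmn : l q ^+ m * l q ^+ n <= l q ^+ (m + n + m * n).
  by rewrite -exprD ler_weXn2l // leq_addr.
exists (a * c), (b * d); split.
- by rewrite normrM (lt_le_trans (ltr_pM _ _ al cl)).
- by rewrite normrM (lt_le_trans (ltr_pM _ _ bl dl)).
- by rewrite intrM mulf_neq0.
- by rewrite mulf_div !intrM.
- rewrite !normrM (le_trans (ler_pM _ _ abm cdn)) // mulrACA ler_wpM2r //.
  by rewrite -PoszM lez_nat leq_addl.
Qed.

End Sorts.

(** * Approximating a real number by [floor (r l) / l] *)

Lemma abs_floor_le (R : realType) (x : R) : `|(Num.floor x)%:~R| <= `|x| + 1.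
Proof.
have /andP [fx xf] := floor_itv x; rewrite intrD in xf.
have /andP [xl xr] : - `|x| <= x <= `|x| by rewrite -ler_norml.
by rewrite ler_norml; apply/andP; split; lra.
Qed.

Lemma floor_div_dist (R : realType) (r : R) (L : int) : 0 < L ->
  `|(Num.floor (r * L%:~R))%:~R / L%:~R - r| <= L%:~R^-1.
Proof.
move=> L0; rewrite -(ltr0z R) in L0.
have /andP [fx xf] := floor_itv (r * L%:~R); rewrite intrD in xf.
have -> : (Num.floor (r * L%:~R))%:~R / L%:~R - r
        = ((Num.floor (r * L%:~R))%:~R - r * L%:~R) / L%:~R.
  by rewrite mulrBl mulfK ?gt_eqF.
rewrite normrM normfV (gtr0_norm L0) -[X in _ <= X]mul1r.
by rewrite ler_wpM2r ?invr_ge0 ?ltW // ltr_norml; apply/andP; split; lra.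
Qed.

Lemma floor_mul_height (R : realType) (r : R) (L : int) (N : nat) : 1 <= L ->
  `|r| + 1 <= N%:R -> `|Num.floor (r * L%:~R)| <= N%:Z * L.
Proof.
move=> L1 rN; rewrite -(ler_int R) intrM intr_norm (le_trans (abs_floor_le _)) //.
rewrite -(ler_int R) in L1; rewrite normrM (gtr0_norm (lt_le_trans ltr01 L1)).
by nra.
Qed.

Lemma mul_lt_exprn (L : int) (N : nat) : (2 <= N)%N -> N%:Z < L -> N%:Z * L < L ^+ N.
Proof.
move=> N2 NL; apply: (@lt_le_trans _ _ (L ^+ 2)); first by rewrite expr2 ltr_pM2r; lia.
by rewrite ler_weXn2l //; lia.
Qed.

Lemma floor_mul_lt_exprn (R : realType) (r : R) (L : int) (N : nat) :
  (2 <= N)%N -> N%:Z < L -> `|r| + 1 <= N%:R -> `|Num.floor (r * L%:~R)| < L ^+ N.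
Proof.
move=> N2 NL rN; apply: le_lt_trans (mul_lt_exprn N2 NL).
by apply: floor_mul_height rN; lia.
Qed.

Section FloorPoint.
Variables (R : realType) (r : R) (l : hypint) (q N : nat).
Hypotheses (q_pr : prime q) (l_lt_q : l q < q%:Z) (N_lt_l : N%:Z < l q)
  (N_ge2 : (2 <= N)%N) (rN : `|r| + 1 <= N%:R).

Local Notation fl := (Num.floor (r * (l q)%:~R)).

Lemma floor_div_frac_rep :
  frac_rep (fl%:~R / (l q)%:~R : 'F_q) fl (l q) (l q ^+ N).
Proof.
have := floor_mul_lt_exprn N_ge2 N_lt_l rN; have := mul_lt_exprn N_ge2 N_lt_l.
by split; rewrite ?intr_Fp_neq0 //; nia.
Qed.

Lemma inS_floor_div : inS l N (fl%:~R / (l q)%:~R : 'F_q).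
Proof.
have [L0 _ _ _] := floor_div_frac_rep; have l1 : 1 <= l q by lia.
have := floor_mul_height l1 rN.
have := floor_mul_lt_exprn N_ge2 N_lt_l rN; have := mul_lt_exprn N_ge2 N_lt_l.
by exists fl, (l q); split=> //; nia.
Qed.

Lemma rval_floor_div : 2 * l q ^+ N * l q ^+ N < q%:Z ->
  rval R (fl%:~R / (l q)%:~R : 'F_q) = fl%:~R / (l q)%:~R.
Proof. exact (rval_frac R q_pr floor_div_frac_rep). Qed.

End FloorPoint.

(** * Limits along an ultrafilter *)

Lemma invr_lt_truncnS (R : realType) (e x : R) :
  0 < e -> (Num.truncn e^-1).+1%:R <= x -> x^-1 < e.
Proof.
move=> e0 ex; have x0 : 0 < x := lt_le_trans (ltr0Sn _ _) ex.
by rewrite -[e]invrK ltf_pV2 ?posrE ?invr_gt0 // (lt_le_trans (truncnS_gt _) ex).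
Qed.

Lemma le_invSn_eq0 (R : realType) (d : R) :
  0 <= d -> (forall n : nat, d <= n.+1%:R^-1) -> d = 0.
Proof.
move=> d0 dn; apply/eqP; rewrite eq_le d0 andbT; apply/ler_addgt0Pr => e e0.
by rewrite add0r ltW // (le_lt_trans (dn _) (invr_lt_truncnS e0 (lexx _))).
Qed.

Lemma fmap_ultra {T U : Type} (f : T -> U) {F : set_system T} :
  UltraFilter F -> UltraFilter (f @ F).
Proof.
move=> FU; split; first exact: fmap_proper_filter.
move=> G GF sfFG; rewrite predeqE => A; split; last exact: sfFG.
move=> GA; have [//|FnA] := in_ultra_setVsetC (f @^-1` A) FU.
have /filter_ex [x [Ax nAx]] : G (A `&` ~` A) by apply: filterI GA (sfFG (~` A) FnA).
by case: (nAx Ax).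
Qed.

Lemma ultra_bounded_cvg (R : realType) (D : set_system nat) (a : nat -> R) (B : R) :
  UltraFilter D -> ae D (fun q => `|a q| <= B) -> cvg (a q @[q --> D]).
Proof.
move=> UD aB; have : compact `[- B, B] := @segment_compact R _ _.
rewrite compact_ultra => /(_ _ (fmap_ultra a UD)) [].
  by apply: filterS aB => q /=; rewrite in_itv /= -ler_norml.
by move=> r [_ ar]; apply/cvg_ex; exists r.
Qed.

(** * The local ultraproduct *)

Section LocalUltraproduct.
Variables (R : realType) (D : set_system nat) (l : hypint).
Context {UD : UltraFilter D}.
Hypotheses (D_prime : D [set q | prime q])
  (l_lt_q : forall K : nat, ae D (fun q => l q ^+ K < q%:Z))
  (l_unbounded : forall N : nat, ae D (fun q => N%:Z < l q)).

Lemma ae_l_ge2 : ae D (fun q => 2 <= l q).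
Proof. by apply: filterS (l_unbounded 1) => q /=; lia. Qed.

Lemma ae_height_lt (m : nat) : ae D (fun q => prime q /\
  2 * (2 * l q ^+ m * l q ^+ m) * (2 * l q ^+ m * l q ^+ m) < q%:Z).
Proof.
apply: filterS3 D_prime (l_lt_q (4 * m + 3)) ae_l_ge2 => q qp lq l2.
by split=> //; apply: le_lt_trans lq; apply: height_exprn_le.
Qed.

Lemma Fl_common x y : Fl D l x -> Fl D l y -> exists m, Sm D l m x /\ Sm D l m y.
Proof.
move=> [m xm] [n yn]; exists (maxn m n).
by split; [apply: filterS2 ae_l_ge2 xm | apply: filterS2 ae_l_ge2 yn] => q l2;
  apply: inS_le; lia.
Qed.

Lemma Fl_one : Fl D l uone.
Proof. by exists 1%N; apply: filterS ae_l_ge2 => q; apply: inS_one. Qed.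

Lemma Fl_opp x : Fl D l x -> Fl D l (fun q => - x q).
Proof. by move=> [m xm]; exists m; apply: filterS xm => q; apply: inS_opp. Qed.

Lemma Fl_add x y : Fl D l x -> Fl D l y -> Fl D l (uadd x y).
Proof.
move=> [m xm] [n yn]; exists (m + n).+1.
by apply: filterS3 ae_l_ge2 xm yn => q; apply: inS_add.
Qed.

Lemma Fl_mul x y : Fl D l x -> Fl D l y -> Fl D l (umul x y).
Proof.
move=> [m xm] [n yn]; exists (m + n + m * n)%N.
by apply: filterS3 ae_l_ge2 xm yn => q l2; apply: inS_mul; lia.
Qed.

Section SameSort.
Variables (m : nat) (x y : ultraelt).
Hypotheses (xm : Sm D l m x) (ym : Sm D l m y).

Lemma ae_rval_add :
  ae D (fun q => rval R (x q + y q) = rval R (x q) + rval R (y q)).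
Proof.
apply: filterS3 (ae_height_lt m) xm ym => q [qp hq].
move=> /inS_frac_rep [a [b [xab _]]] /inS_frac_rep [c [d [ycd _]]].
exact (rval_add R qp xab ycd hq).
Qed.

Lemma ae_rval_sub :
  ae D (fun q => rval R (x q - y q) = rval R (x q) - rval R (y q)).
Proof.
apply: filterS3 (ae_height_lt m) xm ym => q [qp hq].
move=> /inS_frac_rep [a [b [xab _]]] /inS_frac_rep [c [d [ycd _]]].
rewrite (rval_add R qp xab (frac_rep_opp ycd) hq).
by rewrite (rval_opp R qp ycd (height_lt_sq (frac_rep_ge1 ycd) hq)).
Qed.

Lemma ae_rval_mul :
  ae D (fun q => rval R (x q * y q) = rval R (x q) * rval R (y q)).
Proof.
apply: filterS3 (ae_height_lt m) xm ym => q [qp hq].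
move=> /inS_frac_rep [a [b [xab _]]] /inS_frac_rep [c [d [ycd _]]].
exact (rval_mul R qp xab ycd hq).
Qed.

Lemma ae_rval_le_nat : ae D (fun q => `|rval R (x q)| <= m%:R).
Proof.
apply: filterS2 (ae_height_lt m) xm => q [qp hq] /inS_frac_rep [a [b [xab am]]].
exact (rval_le_nat R qp xab am (height_lt_sq (frac_rep_ge1 xab) hq)).
Qed.

Lemma ae_minpair_norm_ratio : ae D (fun q => forall k1 k2, minpair (x q) k1 k2 ->
  (`|k1|%:~R / `|k2|%:~R : R) = `|rval R (x q)|).
Proof.
apply: filterS2 (ae_height_lt m) xm => q [qp hq] /inS_frac_rep [a [b [xab _]]] k1 k2.
exact (minpair_norm_ratio R qp xab (height_lt_sq (frac_rep_ge1 xab) hq)).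
Qed.

End SameSort.

Lemma cvg_ae_eq (f g : nat -> R) (r : R) :
  ae D (fun q => f q = g q) -> g q @[q --> D] --> r -> f q @[q --> D] --> r.
Proof.
by move=> fg; apply: cvg_trans; apply: near_eq_cvg; apply: filterS fg => q ->.
Qed.

Definition stpart (x : ultraelt) : R := lim (rval R (x q) @[q --> D]).

Lemma stpart_cvg x : Fl D l x -> rval R (x q) @[q --> D] --> stpart x.
Proof. by move=> [m xm]; apply: ultra_bounded_cvg UD (ae_rval_le_nat xm). Qed.

Lemma stpart_eq x r : rval R (x q) @[q --> D] --> r -> stpart x = r.
Proof. by move=> xr; apply: (cvg_lim _ xr); apply: norm_hausdorff. Qed.

Lemma stpart_one : stpart uone = 1.
Proof.
apply: stpart_eq; apply: (cvg_ae_eq _ (cvg_cst _)).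
apply: filterS3 D_prime (l_lt_q 1) ae_l_ge2 => q qp lq l2.
by apply: rval1 => //; rewrite expr1 in lq; lia.
Qed.

Lemma stpart_add x y : Fl D l x -> Fl D l y ->
  stpart (uadd x y) = stpart x + stpart y.
Proof.
move=> Fx Fy; have [m [xm ym]] := Fl_common Fx Fy.
apply: stpart_eq; apply: (cvg_ae_eq (ae_rval_add xm ym)).
exact: cvgD (stpart_cvg Fx) (stpart_cvg Fy).
Qed.

Lemma stpart_mul x y : Fl D l x -> Fl D l y ->
  stpart (umul x y) = stpart x * stpart y.
Proof.
move=> Fx Fy; have [m [xm ym]] := Fl_common Fx Fy.
apply: stpart_eq; apply: (cvg_ae_eq (ae_rval_mul xm ym)).
exact: cvgM (stpart_cvg Fx) (stpart_cvg Fy).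
Qed.

Lemma rval_dist_cvg x y : Fl D l x -> Fl D l y ->
  `|rval R (x q - y q)| @[q --> D] --> `|stpart x - stpart y|.
Proof.
move=> Fx Fy; have [m [xm ym]] := Fl_common Fx Fy.
apply: (cvg_ae_eq _ (cvg_norm (cvgB (stpart_cvg Fx) (stpart_cvg Fy)))).
by apply: filterS (ae_rval_sub xm ym) => q /= ->.
Qed.

(* For almost all [q], every minimal pair of [x q - y q] has the ratio
   [|rval (x q - y q)|], so [dist_is] is an ordinary limit. *)
Lemma dist_is_cvg x y r : Fl D l x -> Fl D l y ->
  dist_is D x y r <-> `|rval R (x q - y q)| @[q --> D] --> r.
Proof.
move=> Fx Fy; have [m xym] := Fl_add Fx (Fl_opp Fy).
have ratio := ae_minpair_norm_ratio xym; rewrite cvgrPdist_lt.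
split=> [dxy e e0 | cv e e0].
  apply: filterS2 ratio (dxy e e0) => q qratio [k1 [k2 [xyk ke]]].
  by rewrite distrC -(qratio _ _ xyk).
apply: filterS2 ratio (cv e e0) => q qratio qe.
have [k1 [k2 xyk]] := minpair_ex (x q - y q).
by exists k1, k2; rewrite (qratio _ _ xyk) distrC.
Qed.

Lemma dist_isE x y r : Fl D l x -> Fl D l y ->
  dist_is D x y r <-> r = `|stpart x - stpart y|.
Proof.
move=> Fx Fy; rewrite dist_is_cvg //; split=> [xyr|->]; last exact: rval_dist_cvg.
exact: (cvg_unique _ xyr (rval_dist_cvg Fx Fy)).
Qed.

Lemma approx_stpart x y : Fl D l x -> Fl D l y ->
  approx R D x y <-> stpart x = stpart y.
Proof.
move=> Fx Fy; split=> [xy | xy n].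
  apply/eqP; rewrite -subr_eq0 -normr_eq0; apply/eqP/le_invSn_eq0 => // n.
  by have [r [/(dist_isE _ Fx Fy) <-]] := xy n.
by exists 0; rewrite (dist_isE _ Fx Fy) xy subrr normr0 invr_ge0 ler0n.
Qed.

Lemma cvg_dist_le_invl (f : nat -> R) (r : R) :
  ae D (fun q => `|f q - r| <= (l q)%:~R^-1) -> f q @[q --> D] --> r.
Proof.
move=> fr; apply/cvgrPdist_lt => e e0.
apply: filterS2 fr (l_unbounded (Num.truncn e^-1)) => q fq lq.
rewrite distrC (le_lt_trans fq) // invr_lt_truncnS //.
by rewrite pmulrn ler_int -addn1 PoszD lezD1.
Qed.

Lemma stpart_surj (r : R) : exists x, Fl D l x /\ stpart x = r.
Proof.
pose N := (Num.truncn `|r|).+2.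
have rN : `|r| + 1 <= N%:R by rewrite -natr1 lerD2r ltW // truncnS_gt.
pose x : ultraelt := fun q => (Num.floor (r * (l q)%:~R))%:~R / (l q)%:~R.
have good : ae D (fun q => [/\ prime q, l q < q%:Z, N%:Z < l q &
    2 * (2 * l q ^+ N * l q ^+ N) * (2 * l q ^+ N * l q ^+ N) < q%:Z]).
  apply: filterS3 (l_lt_q 1) (l_unbounded N) (ae_height_lt N) => q.
  by rewrite expr1 => lq Nl [qp hq].
exists x; split.
  by exists N; apply: filterS good => q [qp lq Nl _]; apply: inS_floor_div.
apply/stpart_eq/cvg_dist_le_invl; apply: filterS good => q [qp lq Nl hq].
have lN : 1 <= l q ^+ N by rewrite exprn_ege1 //; lia.
rewrite (rval_floor_div qp lq Nl (isT : (2 <= N)%N) rN (height_lt_sq lN hq)).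
by apply: floor_div_dist; lia.
Qed.

End LocalUltraproduct.

Section ElementaryIntermediate.
Variables (D : set_system nat) (M : hypint -> Prop).
Context {FD : Filter D}.
Hypothesis hM : elem_intermediate D M.

(* [M] is closed under products because [exists x2, x2 = x0 * x1] holds in *Z. *)
Lemma elem_intermediate_mul (x y : hypint) :
  M x -> M y -> M (fun q => x q * y q).
Proof.
case: hM => M_ae _ M_elem _ Mx My.
pose e (i : nat) : hypint := if i == 0%N then x else y.
have Me i : M (e i) by rewrite /e; case: ifP.
pose f := fex 2 (feq (tvar 2) (tmul (tvar 0) (tvar 1))).
have [a [Ma xya]] : satU D M e f.
  by apply/M_elem => //; exists (fun q => x q * y q); split=> //; exact: filterE.
exact: M_ae Ma xya.
Qed.

Lemma elem_intermediate_exprn (x : hypint) (n : nat) :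
  M x -> M (fun q => x q ^+ n).
Proof.
have [M_ae M_const _ _] := hM; move=> Mx; elim: n => [|n IHn].
  by apply: M_ae (M_const 1) _; apply: filterE => q; rewrite expr0.
apply: M_ae (elem_intermediate_mul Mx IHn) _.
by apply: filterE => q; rewrite exprS.
Qed.

End ElementaryIntermediate.

Theorem proposition3p4 (R : realType) (D : set_system nat) (UD : UltraFilter D)
  (hD : nonprincipal D) (hprimes : D [set q | prime q])
  (M : hypint -> Prop) (hM : elem_intermediate D M)
  (hqM : forall x : hypint, M x -> ae D (fun q => x q < q%:Z))
  (l : hypint) (hlM : M l) (hlpos : ae D (fun q => 0 < l q))
  (hlinf : forall N : nat, ae D (fun q => N%:Z < l q)) :
  exists phi : ultraelt -> R,
    [/\ (forall x y, Fl D l x -> Fl D l y -> Fl D l (uadd x y) /\ Fl D l (umul x y)),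
        (Fl D l uone /\ phi uone = 1) /\
        (forall x y, Fl D l x -> Fl D l y ->
           phi (uadd x y) = phi x + phi y /\ phi (umul x y) = phi x * phi y),
        (forall x y, Fl D l x -> Fl D l y -> (phi x = phi y <-> approx R D x y)),
        (forall r : R, exists x, Fl D l x /\ phi x = r)
      & (forall x y, Fl D l x -> Fl D l y -> dist_is D x y `|phi x - phi y|)].
Proof.
have l_lt_q K : ae D (fun q => l q ^+ K < q%:Z).
  exact: hqM (elem_intermediate_exprn hM K hlM).
exists (stpart R D); split.
- by move=> x y Fx Fy; split; [apply: Fl_add | apply: Fl_mul].
- split; first by split; [apply: Fl_one | apply: stpart_one].
  by move=> x y Fx Fy; split; [apply: stpart_add | apply: stpart_mul].
- by move=> x y Fx Fy; rewrite approx_stpart.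
- exact: stpart_surj.
- by move=> x y Fx Fy; rewrite dist_isE.
Qed.
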